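(* Let $S$ be a supersymmetric numerical semigroup. Then the blowup semigroup of $S$ is symmetric.
   Context: $S$ is a numerical semigroup (a submonoid of $\mathbb N$ with finite complement) with minimal generators $e<a_1<\dots<a_t$. ${\rm ord}(n;S)$ is the maximum of $\sum c_i$ over $(c_0,\dots,c_t)\in\mathbb N^{t+1}$ with $c_0e+\sum c_ia_i=n$. $S$ is additive if ${\rm ord}(u+e;S)={\rm ord}(u;S)+1$ for all $u\in S$. With $\operatorname{Ap}(S;e)=\{w\in S:w-e\notin S\}=\{w_0<\dots<w_{e-1}\}$, $S$ is supersymmetric if $S$ is additive and, whenever $i+j=e-1$, both $w_i+w_j=w_{e-1}$ and ${\rm ord}(w_i;S)+{\rm ord}(w_j;S)={\rm ord}(w_{e-1};S)$ hold. The blowup is $B=\langle e,a_1-e,\dots,a_t-e\rangle$. A numerical semigroup $T$ with Frobenius number $F(T)$ (the largest integer not in $T$) is symmetric if, whenever $x+y=F(T)$ with $x,y\in\mathbb Z$, exactly one of $x,y$ is in $T$. *)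

From mathcomp Require Import all_boot all_order all_algebra.
Set Implicit Arguments. Unset Strict Implicit. Unset Printing Implicit Defensive.

Definition numerical_semigroup (S : nat -> Prop) : Prop :=
  S 0 /\ (forall x y, S x -> S y -> S (x + y)) /\
  exists N, forall n, N <= n -> S n.

Definition irreducible_elt (S : nat -> Prop) (x : nat) : Prop :=
  S x /\ 0 < x /\ ~ (exists y z, [/\ S y, S z, 0 < y, 0 < z & x = y + z]).

Definition minimal_generators (S : nat -> Prop) (g : seq nat) : Prop :=
  sorted ltn g /\ forall x, x \in g <-> irreducible_elt S x.

Definition mult (g : seq nat) : nat := head 0 g.

(* Since all generators are >= 1, every coefficient is <= n, so the maximum
   may be taken over coefficient vectors with entries in 'I_n.+1. *)
Definition ord (g : seq nat) (n : nat) : nat :=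
  \max_(c : {ffun 'I_(size g) -> 'I_n.+1}
          | \sum_(i < size g) c i * nth 0 g i == n)
     \sum_(i < size g) (c i : nat).

Definition additive (S : nat -> Prop) (g : seq nat) : Prop :=
  forall u, S u -> ord g (u + mult g) = (ord g u).+1.

(* Apery set Ap(S;e) = {w in S : w - e notin S} (w - e taken in Z). *)
Definition apery (S : nat -> Prop) (e w : nat) : Prop :=
  S w /\ ~ (e <= w /\ S (w - e)).

Definition apery_enum (S : nat -> Prop) (e : nat) (w : nat -> nat) : Prop :=
  (forall i j, i < j < e -> w i < w j) /\
  (forall x, apery S e x <-> exists2 i, i < e & x = w i).

Definition supersymmetric (S : nat -> Prop) (g : seq nat) : Prop :=
  additive S g /\
  forall w, apery_enum S (mult g) w ->
    forall i j, i + j = (mult g).-1 ->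
      w i + w j = w (mult g).-1 /\
      ord g (w i) + ord g (w j) = ord g (w (mult g).-1).

Definition gen_by (l : seq nat) (n : nat) : Prop :=
  exists c : seq nat, size c = size l /\
    \sum_(i < size l) nth 0 c i * nth 0 l i = n.

Definition blowup (g : seq nat) : nat -> Prop :=
  gen_by (mult g :: [seq a - mult g | a <- behead g]).

Definition in_Z (T : nat -> Prop) (z : int) : Prop :=
  (0 <= z)%R /\ T `|z|%N.

Definition symmetric_sg (T : nat -> Prop) : Prop :=
  exists F : int,
    [/\ ~ in_Z T F,
        (forall z : int, (F < z)%R -> in_Z T z) &
        (forall x y : int, (x + y = F)%R ->
           (in_Z T x /\ ~ in_Z T y) \/ (~ in_Z T x /\ in_Z T y))].

From mathcomp Require Import all_boot all_order all_algebra zify.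
From Stdlib Require Import Classical ClassicalEpsilon.
Set Implicit Arguments. Unset Strict Implicit. Unset Printing Implicit Defensive.

(* Write e for the multiplicity. Every w in S has a representation of maximal
   length ord(w), and subtracting e from each of its generators shows
   w - ord(w) e in the blowup B. For the elements w of Ap(S;e) the additivity of
   S shows that w - ord(w) e - e is not in B, so these elements form the Apery
   set of B with respect to e. Supersymmetry says exactly that they pair up to
   sum to the largest of them, which is the classical Apery-set criterion for
   the symmetry of B (with Frobenius number that largest element minus e). *)

Lemma eq_mod_addMn m n d : m <= n -> m = n %[mod d] -> exists k, n = m + k * d.
Proof.
move=> le_mn /eqP; rewrite eq_sym eqn_mod_dvd // => /dvdnP [k hk].
by exists k; rewrite -hk subnKC.
Qed.

Lemma divz_decomp (e : nat) (z : int) : 0 < e ->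
  exists q (r : nat), r < e /\ z = (q * Posz e + Posz r)%R.
Proof.
move=> e_gt0; have e_neq0 : (Posz e != 0)%R by rewrite eqz_nat -lt0n.
exists (z %/ e)%Z, `|(z %% e)%Z|%N.
have := ltz_pmod z (e_gt0 : (0 < Posz e)%R); have := modz_ge0 z e_neq0.
split; [lia | rewrite {1}(divz_eq z e); lia].
Qed.

Section AperyCriterion.

Variables (T : nat -> Prop) (e : nat) (v : nat -> nat) (rV : nat).
Hypothesis T_add : forall x y, T x -> T y -> T (x + y).
Hypothesis T_e : T e.
Hypothesis e_gt0 : 0 < e.
Hypothesis v_mod : forall r, r < e -> v r %% e = r.
Hypothesis T_v : forall r, r < e -> T (v r).
Hypothesis T_v_subn : forall r, r < e -> e <= v r -> ~ T (v r - e).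
Hypothesis rV_lt : rV < e.
Hypothesis v_pair : forall r, r < e -> exists2 r', r' < e & v r + v r' = v rV.

Lemma T_addMe n k : T n -> T (n + k * e).
Proof.
move=> Tn; elim: k => [|k IH]; first by rewrite addn0.
by rewrite mulSn addnCA addnC; apply: T_add.
Qed.

Lemma memT_mod n : T n <-> v (n %% e) <= n.
Proof.
have lt_r := ltn_pmod n e_gt0; have vr_mod := v_mod lt_r.
split=> [Tn | le_vn].
- rewrite leqNgt; apply/negP => lt_nv.
  have [k def_v] := eq_mod_addMn (ltnW lt_nv) (esym vr_mod).
  case: k def_v => [|k] def_v; first by move: lt_nv; rewrite def_v addn0 ltnn.
  apply: (T_v_subn lt_r); first by rewrite def_v mulSn; lia.
  have -> : v (n %% e) - e = n + k * e by rewrite def_v mulSn; lia.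
  exact: T_addMe.
- have [k ->] := eq_mod_addMn le_vn vr_mod.
  exact/T_addMe/T_v.
Qed.

Lemma v_divn r : r < e -> exists a, v r = a * e + r.
Proof. by move=> lt_re; exists (v r %/ e); rewrite {1}(divn_eq (v r) e) v_mod. Qed.

Local Open Scope ring_scope.

Lemma in_Z_mod (q : int) (r : nat) : (r < e)%N ->
  in_Z T (q * e%:Z + r%:Z) <-> (v r)%:Z <= q * e%:Z + r%:Z.
Proof.
move=> lt_re; set z := q * e%:Z + r%:Z.
have mod_z : 0 <= z -> (`|z|%N %% e)%N = r.
  move=> z_ge0; have q_ge0 : 0 <= q by rewrite /z in z_ge0; nia.
  have -> : `|z|%N = (`|q|%N * e + r)%N by rewrite /z; lia.
  by rewrite modnMDl modn_small.
split=> [[z_ge0 /memT_mod] | le_vz]; first by rewrite mod_z //; lia.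
have z_ge0 : 0 <= z by lia.
by split=> //; apply/memT_mod; rewrite mod_z //; lia.
Qed.

Lemma apery_symmetric : symmetric_sg T.
Proof.
pose F := (v rV)%:Z - e%:Z.
have F_notin : ~ in_Z T F.
  move=> [F_ge0 T_F]; apply: (T_v_subn rV_lt); first by rewrite /F in F_ge0; lia.
  by have -> : (v rV - e)%N = `|F|%N by rewrite /F; lia.
have F_compl x y : x + y = F -> ~ in_Z T x -> in_Z T y.
  have [q [r [lt_re ->]]] := divz_decomp x e_gt0.
  move=> sum_xy /in_Z_mod x_notin; have {}x_notin := x_notin lt_re.
  have [r' lt_r'e pair_r] := v_pair lt_re.
  have [a def_vr] := v_divn lt_re; have [a' def_vr'] := v_divn lt_r'e.
  have -> : y = (a%:Z + a'%:Z - q - 1) * e%:Z + r'%:Z.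
    by move: sum_xy; rewrite /F -pair_r def_vr def_vr'; lia.
  apply/in_Z_mod => //; rewrite def_vr in x_notin; rewrite def_vr'.
  have : q + 1 <= a%:Z by nia.
  nia.
exists F; split=> // [z lt_Fz | x y sum_xy].
  by apply: (F_compl (F - z)); [lia | case=> ?; lia].
have [x_in | x_notin] := classic (in_Z T x); last first.
  by right; split=> //; exact: F_compl sum_xy x_notin.
left; split=> // -[y_ge0 T_y]; apply: F_notin; rewrite -sum_xy.
case: x_in => x_ge0 T_x; split; first lia.
have -> : absz (x + y) = (absz x + absz y)%N by lia.
exact: T_add.
Qed.

End AperyCriterion.

Section NumericalSemigroup.

Variable S : nat -> Prop.
Hypothesis S_ns : numerical_semigroup S.

Lemma memS0 : S 0.
Proof. by case: S_ns. Qed.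

Lemma memSD x y : S x -> S y -> S (x + y).
Proof. by case: S_ns => _ [addS _]; apply: addS. Qed.

Lemma memSMn k x : S x -> S (k * x).
Proof.
move=> Sx; elim: k => [|k IH]; first by rewrite mul0n; exact: memS0.
by rewrite mulSn; exact: memSD.
Qed.

Lemma exists_irreducible_elt : exists x, irreducible_elt S x.
Proof.
have irr_below : forall n, S n -> 0 < n -> exists x, irreducible_elt S x.
  elim/ltn_ind => n IH Sn n_gt0.
  have [[y [z [Sy Sz y_gt0 z_gt0 def_n]]] | n_irr] :=
    classic (exists y z, [/\ S y, S z, 0 < y, 0 < z & n = y + z]).
    by apply: (IH y) => //; lia.
  by exists n.
case: S_ns => _ [_ [N S_ge]].
exact: (irr_below N.+1 (S_ge _ (leqnSn N))).
Qed.

Definition apery_min e r a :=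
  [/\ S a, a %% e = r & forall s, S s -> s %% e = r -> a <= s].

(* The least element of S congruent to r modulo e; junk unless r < e. *)
Definition apery_elt e r := epsilon (inhabits 0) (apery_min e r).

Lemma apery_eltP e r : r < e -> apery_min e r (apery_elt e r).
Proof.
move=> lt_re; apply: epsilon_spec.
case: S_ns => _ [_ [N S_ge]].
pose P n := if excluded_middle_informative (S n /\ n %% e = r) then true else false.
have PP n : reflect (S n /\ n %% e = r) (P n).
  by rewrite /P; case: excluded_middle_informative => h; constructor.
have exP : exists n, P n.
  exists (N * e + r); apply/PP; split; first by apply: S_ge; nia.
  by rewrite modnMDl modn_small.
case: (ex_minnP exP) => a /PP [Sa mod_a] min_a.
by exists a; split=> // s Ss mod_s; apply/min_a/PP.
Qed.

Lemma apery_apery_elt e r : r < e -> apery S e (apery_elt e r).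
Proof.
move=> lt_re; have [Sa mod_a min_a] := apery_eltP lt_re.
split=> // -[le_ea S_sub].
have mod_sub : (apery_elt e r - e) %% e = r.
  by rewrite -[in RHS]mod_a -[in RHS](subnK le_ea) modnDr.
have := min_a _ S_sub mod_sub; lia.
Qed.

Lemma apery_eq_elt e x : S e -> 0 < e -> apery S e x -> x = apery_elt e (x %% e).
Proof.
move=> Se e_gt0 [Sx x_notin].
have [Sa mod_a min_a] := apery_eltP (ltn_pmod x e_gt0).
set a := apery_elt e (x %% e) in Sa mod_a min_a *.
have [k def_x] := eq_mod_addMn (min_a _ Sx erefl) mod_a.
case: k def_x => [|k] def_x; first by rewrite def_x mul0n addn0.
case: x_notin; split; first by rewrite def_x mulSn; lia.
have -> : x - e = a + k * e by rewrite def_x mulSn; lia.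
by apply/memSD/memSMn.
Qed.

Lemma exists_apery_enum e : S e -> 0 < e -> exists w, apery_enum S e w.
Proof.
move=> Se e_gt0; pose s := sort leq [seq apery_elt e r | r <- iota 0 e].
have size_s : size s = e by rewrite size_sort size_map size_iota.
have mem_s x : x \in s <-> apery S e x.
  rewrite mem_sort; split.
    case/mapP => r; rewrite mem_iota add0n => /andP [_ lt_re] ->.
    exact: apery_apery_elt.
  move=> Ax; rewrite (apery_eq_elt Se e_gt0 Ax); apply: map_f.
  by rewrite mem_iota add0n ltn_pmod.
have s_sorted : sorted ltn s.
  rewrite ltn_sorted_uniq_leq sort_sorted ?andbT; last exact: leq_total.
  rewrite sort_uniq map_inj_in_uniq ?iota_uniq // => r1 r2.
  rewrite !mem_iota !add0n => /andP [_ lt_r1] /andP [_ lt_r2] eq_elt.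
  by have [_ <- _] := apery_eltP lt_r1; have [_ <- _] := apery_eltP lt_r2; rewrite eq_elt.
exists (nth 0 s); split=> [i j /andP [lt_ij lt_je] | x].
  by apply: (sorted_ltn_nth ltn_trans 0 s_sorted); rewrite ?inE ?size_s //; lia.
rewrite -mem_s; split; first by case/(nthP 0) => i; rewrite size_s => lt_ie <-; exists i.
by case=> i lt_ie ->; rewrite mem_nth ?size_s.
Qed.

End NumericalSemigroup.

Definition rep (g : seq nat) (c : nat -> nat) := \sum_(i < size g) c i * nth 0 g i.

Section Representations.

Variable g : seq nat.
Hypothesis g_gt0 : forall i, i < size g -> 0 < nth 0 g i.

Lemma leq_coef_rep c i : i < size g -> c i <= rep g c.
Proof.
move=> lt_ig; rewrite /rep (bigD1 (Ordinal lt_ig)) //=.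
by apply: leq_trans (leq_addr _ _); rewrite leq_pmulr ?g_gt0.
Qed.

Let coef c : {ffun 'I_(size g) -> 'I_(rep g c).+1} :=
  [ffun i : 'I_(size g) => inord (c i)].

Let coefE c i : coef c i = c i :> nat.
Proof. by rewrite ffunE inordK // ltnS leq_coef_rep. Qed.

Let coef_rep c : \sum_(i < size g) coef c i * nth 0 g i == rep g c.
Proof. by apply/eqP/eq_bigr => i _; rewrite coefE. Qed.

Lemma sum_leq_ord (c : nat -> nat) : \sum_(i < size g) c i <= ord g (rep g c).
Proof.
rewrite (eq_bigr (fun i => coef c i : nat)) => [|i _]; last by rewrite coefE.
exact: (leq_bigmax_cond _ (coef_rep c)).
Qed.

Lemma ord_attained (c : nat -> nat) : exists2 c',
  rep g c' = rep g c & \sum_(i < size g) c' i = ord g (rep g c).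
Proof.
pose A := [pred m : {ffun 'I_(size g) -> 'I_(rep g c).+1} |
            \sum_(i < size g) m i * nth 0 g i == rep g c].
have A_gt0 : 0 < #|A| by apply/card_gt0P; exists (coef c); exact: coef_rep.
pose weight (m : {ffun 'I_(size g) -> 'I_(rep g c).+1}) := \sum_(i < size g) (m i : nat).
have [m Am ord_m] := eq_bigmax_cond weight A_gt0.
pose c' j := oapp (fun i : 'I_(size g) => m i : nat) 0 (insub j).
have c'E (i : 'I_(size g)) : c' i = m i by rewrite /c' valK.
exists c'; last by rewrite /ord ord_m; apply: eq_bigr => i _; rewrite c'E.
by rewrite -(eqP Am); apply: eq_bigr => i _; rewrite c'E.
Qed.

End Representations.

Lemma rep_splitE (g : seq nat) (c : nat -> nat) :
  (forall i, i < size g -> mult g <= nth 0 g i) ->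
  rep g c = \sum_(i < size g) c i * (nth 0 g i - mult g)
            + (\sum_(i < size g) c i) * mult g.
Proof.
move=> mult_le; rewrite /rep big_distrl -big_split; apply: eq_bigr => i _ /=.
by rewrite -mulnDr subnK ?mult_le.
Qed.

Definition blowup_sum (g : seq nat) (d : nat -> nat) :=
  d 0 * mult g + \sum_(i < size g) d i * (nth 0 g i - mult g).

Section Blowup.

Variable g : seq nat.
Hypothesis size_g_gt0 : 0 < size g.

Lemma blowupP n : blowup g n <-> exists d, blowup_sum g d = n.
Proof.
case: g size_g_gt0 => [//|a g'] _; set e := mult (a :: g').
set l := e :: [seq x - e | x <- g'].
have size_l : size l = size (a :: g') by rewrite /= size_map.
have sum_l (d : nat -> nat) :
    \sum_(i < size l) d i * nth 0 l i = blowup_sum (a :: g') d.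
  rewrite size_l /blowup_sum !big_ord_recl.
  have -> : nth 0 (a :: g') ord0 - e = 0 by rewrite /e /mult /= subnn.
  rewrite muln0 add0n; congr (_ + _); apply: eq_bigr => i _.
  by rewrite lift0 /= (nth_map 0).
split=> [[c [size_c <-]] | [d <-]].
  by exists (nth 0 c); rewrite -sum_l.
exists (mkseq d (size l)); rewrite size_mkseq -sum_l; split=> //.
by apply: eq_bigr => i _; rewrite nth_mkseq.
Qed.

Lemma blowup_add x y : blowup g x -> blowup g y -> blowup g (x + y).
Proof.
move=> /blowupP [d1 <-] /blowupP [d2 <-]; apply/blowupP.
exists (fun i => d1 i + d2 i); rewrite /blowup_sum.
under eq_bigr do rewrite mulnDl.
by rewrite big_split /= mulnDl; lia.
Qed.

Lemma blowup_mult : blowup g (mult g).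
Proof.
apply/blowupP; exists (fun i => i == 0); rewrite /blowup_sum mul1n.
rewrite big1 ?addn0 // => -[[|i] lt_i] _ //=.
by rewrite /mult -nth0 subnn.
Qed.

End Blowup.

Section MinimalGenerators.

Variables (S : nat -> Prop) (g : seq nat).
Hypothesis S_ns : numerical_semigroup S.
Hypothesis g_min : minimal_generators S g.

Local Notation e := (mult g).

Lemma irreducible_gen i : i < size g -> irreducible_elt S (nth 0 g i).
Proof. by move=> lt_ig; apply/g_min.2/mem_nth. Qed.

Lemma mem_gen i : i < size g -> S (nth 0 g i).
Proof. by case/irreducible_gen. Qed.

Lemma gen_gt0 i : i < size g -> 0 < nth 0 g i.
Proof. by case/irreducible_gen => _ []. Qed.

Lemma mult_leq_gen i : i < size g -> e <= nth 0 g i.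
Proof.
case: g g_min => [//|a g'] [g_sorted _]; case: i => [|i] //= lt_ig.
have /allP := order_path_min ltn_trans g_sorted.
by move/(_ (nth 0 g' i) (mem_nth 0 lt_ig))/ltnW.
Qed.

Lemma size_gen_gt0 : 0 < size g.
Proof. by have [x /g_min.2] := exists_irreducible_elt S_ns; case: g. Qed.

Lemma mult_gt0 : 0 < e.
Proof. by rewrite /mult -nth0 gen_gt0 // size_gen_gt0. Qed.

Lemma mem_mult : S e.
Proof. by rewrite /mult -nth0; apply/mem_gen/size_gen_gt0. Qed.

Lemma mem_rep c : S (rep g c).
Proof.
apply: (big_ind S (memS0 S_ns) (memSD S_ns)) => i _.
by apply/(memSMn S_ns)/mem_gen.
Qed.

Lemma rep_surj n : S n -> exists c, rep g c = n.
Proof.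
elim/ltn_ind: n => n IH Sn; have [-> | n_gt0] := posnP n.
  by exists (fun=> 0); rewrite /rep big1 // => i _; rewrite mul0n.
have [[y [z [Sy Sz y_gt0 z_gt0 def_n]]] | n_irr] :=
  classic (exists y z, [/\ S y, S z, 0 < y, 0 < z & n = y + z]).
  have [cy def_y] := IH y ltac:(lia) Sy; have [cz def_z] := IH z ltac:(lia) Sz.
  exists (fun i => cy i + cz i); rewrite def_n -def_y -def_z /rep -big_split.
  by apply: eq_bigr => i _; rewrite mulnDl.
have /(nthP 0) [i lt_ig def_i] : n \in g by apply/g_min.2.
exists (fun j => j == i); rewrite /rep (bigD1 (Ordinal lt_ig)) //= eqxx mul1n def_i.
by rewrite big1 ?addn0 // => j /negPf; rewrite -val_eqE /= => ->.
Qed.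

Lemma ord_attained_mem w : S w -> exists2 c,
  rep g c = w & \sum_(i < size g) c i = ord g w.
Proof. by case/rep_surj => c0 <-; exact: (ord_attained gen_gt0 c0). Qed.

Lemma ord_mult_leq w : S w -> ord g w * e <= w.
Proof.
case/ord_attained_mem => c <- <-; rewrite [X in _ <= X](rep_splitE _ mult_leq_gen).
exact: leq_addl.
Qed.

Lemma blowup_sub_ord w : S w -> blowup g (w - ord g w * e).
Proof.
case/ord_attained_mem => c <- <-; apply/(blowupP size_gen_gt0).
exists (fun i => if i == 0 then 0 else c i).
rewrite (rep_splitE _ mult_leq_gen) addnK /blowup_sum mul0n add0n.
by apply: eq_bigr => -[[|i] lt_i] _ //=; rewrite /mult -nth0 subnn !muln0.
Qed.

Lemma blowup_lift b : blowup g b ->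
  exists u d0 D, [/\ S u, D <= ord g u & u + d0 * e = b + D * e].
Proof.
case/(blowupP size_gen_gt0) => d <-.
exists (rep g d), (d 0), (\sum_(i < size g) d i); split.
- exact: mem_rep.
- exact: sum_leq_ord gen_gt0 _.
- by rewrite (rep_splitE _ mult_leq_gen) /blowup_sum; lia.
Qed.

Lemma ord_addMn u k : additive S g -> S u -> ord g (u + k * e) = ord g u + k.
Proof.
move=> g_add Su; elim: k => [|k IH]; first by rewrite mul0n !addn0.
rewrite mulSn [e + _]addnC addnA g_add ?IH ?addnS //.
exact/(memSD S_ns)/(memSMn S_ns)/mem_mult.
Qed.

Definition blowup_apery r := apery_elt S e r - ord g (apery_elt S e r) * e.

Lemma blowup_apery_mod r : r < e -> blowup_apery r %% e = r.
Proof.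
move=> lt_re; have [Sw mod_w _] := apery_eltP S_ns lt_re.
have le_mw := ord_mult_leq Sw.
by rewrite -[RHS]mod_w /blowup_apery -[in RHS](subnK le_mw) addnC modnMDl.
Qed.

Lemma mem_blowup_apery r : r < e -> blowup g (blowup_apery r).
Proof. by move=> lt_re; apply/blowup_sub_ord; case: (apery_eltP S_ns lt_re). Qed.

Lemma blowup_apery_subn_notin r : additive S g -> r < e ->
  e <= blowup_apery r -> ~ blowup g (blowup_apery r - e).
Proof.
move=> g_add lt_re le_ev /blowup_lift [u [d0 [D [Su le_Du def_u]]]].
have [Sw w_notin] := apery_apery_elt S_ns lt_re.
have le_mw := ord_mult_leq Sw.
move: le_ev def_u; rewrite /blowup_apery.
set w := apery_elt S e r in Sw w_notin le_mw *; set m := ord g w in le_mw *.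
move=> le_ev def_u; have def_w : u + (d0 + m + 1) * e = w + D * e.
  by rewrite !mulnDl mul1n; lia.
have [le_D | lt_D] := leqP D (d0 + m + 1).
- have [j def_j] : exists j, d0 + m + 1 = D + j by exists (d0 + m + 1 - D); lia.
  rewrite def_j mulnDl in def_w.
  case: j def_j def_w => [|j] def_j def_w.
    have u_w : u = w by lia.
    by move: le_Du; rewrite u_w -/m; lia.
  apply: w_notin; split; first by rewrite mulSn in def_w; lia.
  have -> : w - e = u + j * e by rewrite mulSn in def_w; lia.
  exact/(memSD S_ns)/(memSMn S_ns)/mem_mult.
- have [j def_j] : exists j, D = d0 + m + 1 + j by exists (D - (d0 + m + 1)); lia.
  rewrite def_j mulnDl in def_w.
  have u_w : u = w + j * e by lia.
  by move: le_Du; rewrite u_w ord_addMn // -/m; lia.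
Qed.

Lemma blowup_apery_pair : supersymmetric S g ->
  exists2 rV, rV < e & forall r, r < e ->
    exists2 r', r' < e & blowup_apery r + blowup_apery r' = blowup_apery rV.
Proof.
case=> _ g_ssym; have [w w_enum] := exists_apery_enum S_ns mem_mult mult_gt0.
have w_apery i : i < e -> apery S e (w i) by move=> lt_ie; apply/w_enum.2; exists i.
have w_elt i : i < e -> w i = apery_elt S e (w i %% e).
  by move=> lt_ie; apply: (apery_eq_elt S_ns mem_mult mult_gt0 (w_apery i lt_ie)).
exists (w e.-1 %% e) => [|r lt_re]; first exact: ltn_pmod mult_gt0.
have [i lt_ie def_i] := (w_enum.2 _).1 (apery_apery_elt S_ns lt_re).
have [sum_w sum_ord] := g_ssym w w_enum i (e.-1 - i) ltac:(lia).
exists (w (e.-1 - i) %% e); first exact: ltn_pmod mult_gt0.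
have lt_je : e.-1 - i < e by have := mult_gt0; lia.
have lt_last : e.-1 < e by have := mult_gt0; lia.
rewrite /blowup_apery -(w_elt _ lt_je) -(w_elt _ lt_last) def_i -sum_ord -sum_w mulnDl.
have := ord_mult_leq (w_apery _ lt_ie).1; have := ord_mult_leq (w_apery _ lt_je).1.
lia.
Qed.

End MinimalGenerators.

Theorem lemma4p11 (S : nat -> Prop) (g : seq nat) :
  numerical_semigroup S -> minimal_generators S g -> supersymmetric S g ->
  symmetric_sg (blowup g).
Proof.
move=> S_ns g_min g_ssym; have g_add := g_ssym.1.
have [rV lt_rV pair] := blowup_apery_pair S_ns g_min g_ssym.
have size_g := size_gen_gt0 S_ns g_min.
apply: (apery_symmetric (blowup_add size_g) (blowup_mult size_g) (mult_gt0 S_ns g_min)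
          _ _ _ lt_rV pair).
- exact: blowup_apery_mod.
- exact: mem_blowup_apery.
- by move=> r; apply: (blowup_apery_subn_notin S_ns g_min g_add).
Qed.
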